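(* Let $q\in\mathbb{C}^\times$ with $q\neq\pm1$, let $\mathbb{C}[x_1,\dots,x_n]$ be the polynomial algebra (the algebra of polynomial functions on an $n$-dimensional complex vector space with linear coordinates $x_1,\dots,x_n$), and fix $i\in\{1,\dots,n\}$. If $D$ is a twisted derivation of $\mathbb{C}[x_1,\dots,x_n]$ relative to $\gamma_{q,x_i}$, then there is a polynomial $f_i\in\mathbb{C}[x_1,\dots,x_n]$ such that $D=f_i\,\partial_{q,x_i}$ (i.e. $D(a)=f_i\cdot\partial_{q,x_i}(a)$ for all $a$).
   Context: For an associative $\mathbb{C}$-algebra $A$ and an algebra automorphism $\sigma$ of $A$, a twisted derivation of $A$ relative to $\sigma$ is a linear map $D\colon A\to A$ with $D(ab)=D(a)\sigma(b)+\sigma^{-1}(a)D(b)$ for all $a,b\in A$. Here $\gamma_{q,x_i}=q^{x_i\partial_{x_i}}$ is the algebra automorphism of $\mathbb{C}[x_1,\dots,x_n]$ with $x_i\mapsto qx_i$ and $x_j\mapsto x_j$ for $j\neq i$, and $\partial_{q,x_i}=\frac{1}{x_i}\,\frac{q^{x_i\partial_{x_i}}-q^{-x_i\partial_{x_i}}}{q-q^{-1}}$, i.e. the linear map sending a monomial $x_1^{a_1}\cdots x_n^{a_n}$ to $[a_i]_q\,x_1^{a_1}\cdots x_i^{a_i-1}\cdots x_n^{a_n}$, where $[v]_q=\frac{q^v-q^{-v}}{q-q^{-1}}$. It is a twisted derivation relative to $\gamma_{q,x_i}$. *)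

From Stdlib Require Import Reals.
From mathcomp Require Import all_boot all_algebra.
From mathcomp Require Import Rstruct.
From mathcomp.real_closed Require Import complex.
From mathcomp Require Import mpoly.

Set Implicit Arguments.
Unset Strict Implicit.
Unset Printing Implicit Defensive.
Import GRing.Theory.
Local Open Scope ring_scope.

Definition CC : closedFieldType := R[i].

Definition qint (q : CC) (v : nat) : CC := (q ^+ v - q ^- v) / (q - q^-1).

Definition gamma_q (n : nat) (q : CC) (i : 'I_n) (p : {mpoly CC[n]}) : {mpoly CC[n]} :=
  comp_mpoly [tuple (if j == i then q *: 'X_j else 'X_j) | j < n] p.

Definition mdec (n : nat) (m : 'X_{1..n}) (i : 'I_n) : 'X_{1..n} :=
  [multinom (m j - (j == i))%N | j < n].

(* partial_{q,x_i}: the linear map x^a |-> [a_i]_q x^{a - e_i}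
   (when a_i = 0 the coefficient [0]_q is 0). *)
Definition dq (n : nat) (q : CC) (i : 'I_n) (p : {mpoly CC[n]}) : {mpoly CC[n]} :=
  \sum_(m <- msupp p) (p@_m * qint q (m i)) *: 'X_[mdec m i].

Definition twisted_derivation (A : pzRingType) (sigma sigma_inv : A -> A)
  (D : A -> A) : Prop :=
  forall a b, D (a * b) = D a * sigma b + sigma_inv a * D b.

(* Commuting x_i past x_j (j <> i) in the twisted Leibniz rule gives
   (q - q^-1) x_i D(x_j) = 0, because gamma and gamma^-1 differ on x_i but fix
   x_j; hence D kills every x_j with j <> i.  On monomials, D and
   a |-> D(x_i) * dq(a) then obey the same twisted Leibniz rule (for dq this
   is the identity [a+b]_q = [a]_q q^b + q^-a [b]_q) and agree on 1 and on the
   generators, so they agree on all monomials by induction, hence everywhere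
   by linearity. *)

From Stdlib Require Import Reals.
From mathcomp Require Import all_boot all_algebra.
From mathcomp Require Import Rstruct.
From mathcomp.real_closed Require Import complex.
From mathcomp Require Import mpoly.
From mathcomp Require Import ring.
Set Implicit Arguments.
Unset Strict Implicit.
Unset Printing Implicit Defensive.
Import GRing.Theory.
Local Open Scope ring_scope.

Lemma mnm_ind (n : nat) (P : 'X_{1..n} -> Prop) :
  P 0%MM -> (forall m j, P m -> P (m + U_(j))%MM) -> forall m, P m.
Proof.
move=> P0 PS m; elim: {m}(mdeg m) {-2}m (erefl (mdeg m)) => [|d IH] m dm.
  by move/eqP: dm; rewrite mdeg_eq0 => /eqP->.
have [j mj] : exists j, (0 < m j)%N.
  apply/existsP; apply: contraT; rewrite negb_exists => /forallP m0.
  suff : m = 0%MM by move=> m0'; rewrite m0' mdeg0 in dm.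
  by apply/mnmP => l; rewrite mnm0E; apply/eqP; rewrite -leqn0 leqNgt m0.
have em : m = (m - U_(j) + U_(j))%MM.
  apply/mnmP => l; rewrite mnmDE mnmBE mnm1E.
  by case: eqP => [<-|_]; rewrite ?subnK ?subn0 ?addn0.
rewrite em; apply/PS/IH.
by move: dm; rewrite {1}em mdegD mdeg1 addn1 => -[].
Qed.

Lemma mpolyX_neq0 (R : nzRingType) (n : nat) (m : 'X_{1..n}) :
  'X_[R, m] != 0.
Proof. by rewrite -msupp_eq0 msuppX. Qed.

Lemma twisted_derivation1 (A : pzRingType) (sigma sigma_inv D : A -> A) :
  twisted_derivation sigma sigma_inv D -> sigma 1 = 1 -> sigma_inv 1 = 1 -> D 1 = 0.
Proof.
move=> hD s1 si1; have D11 := hD 1 1.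
rewrite mulr1 s1 si1 mulr1 mul1r in D11.
by apply: (addrI (D 1)); rewrite -D11 addr0.
Qed.

Lemma twisted_derivation_comm (A : comPzRingType) (sigma sigma_inv D : A -> A) :
  twisted_derivation sigma sigma_inv D ->
  forall a b, D a * (sigma b - sigma_inv b) = D b * (sigma a - sigma_inv a).
Proof.
move=> hD a b; apply/eqP; rewrite -subr_eq0.
have -> : D a * (sigma b - sigma_inv b) - D b * (sigma a - sigma_inv a)
    = (D a * sigma b + sigma_inv a * D b) - (D b * sigma a + sigma_inv b * D a).
  by ring.
by rewrite -!hD mulrC subrr.
Qed.

Lemma subr_inv_neq0 (F : fieldType) (x : F) :
  x != 0 -> x != 1 -> x != -1 -> x - x^-1 != 0.
Proof.
move=> x0 x1 xN1; have -> : x - x^-1 = (x - 1) * (x + 1) / x by field.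
by rewrite !mulf_neq0 ?invr_eq0 // ?subr_eq0 // addr_eq0.
Qed.

Section QInteger.
Variable q : CC.

Lemma qint0 : qint q 0 = 0.
Proof. by rewrite /qint expr0 invr1 subrr mul0r. Qed.

Lemma qint1 : q - q^-1 != 0 -> qint q 1 = 1.
Proof. by move=> hq; rewrite /qint !expr1 divff. Qed.

Lemma qintD a b : qint q (a + b) = qint q a * q ^+ b + q ^- a * qint q b.
Proof. by rewrite /qint exprD invfM; ring. Qed.

End QInteger.

Definition twisted_derivation_on_monomials {R : nzRingType} {n : nat}
    (sigma sigma_inv D : {mpoly R[n]} -> {mpoly R[n]}) : Prop :=
  forall a b : 'X_{1..n},
    D ('X_[a] * 'X_[b]) = D 'X_[a] * sigma 'X_[b] + sigma_inv 'X_[a] * D 'X_[b].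

Section TwistedDerivationOnMonomials.
Variables (R : comNzRingType) (n : nat) (sigma sigma_inv : {mpoly R[n]} -> {mpoly R[n]}).

Lemma twisted_derivation_on_monomials_mull (D : {mpoly R[n]} -> {mpoly R[n]}) f :
  twisted_derivation_on_monomials sigma sigma_inv D ->
  twisted_derivation_on_monomials sigma sigma_inv (fun a => f * D a).
Proof. by move=> hD a b; rewrite hD mulrDr mulrA mulrCA. Qed.

Lemma eq_twisted_derivation_on_monomials (D E : {mpoly R[n]} -> {mpoly R[n]}) :
  twisted_derivation_on_monomials sigma sigma_inv D ->
  twisted_derivation_on_monomials sigma sigma_inv E ->
  D 1 = E 1 -> (forall j, D 'X_j = E 'X_j) -> forall m, D 'X_[m] = E 'X_[m].
Proof.
move=> hD hE DE1 DEX; elim/mnm_ind => [|m j DEm]; first by rewrite mpolyX0.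
by rewrite mpolyXD hD hE DEm DEX.
Qed.

End TwistedDerivationOnMonomials.

Section Gamma.
Variables (n : nat) (q : CC) (i : 'I_n).

Lemma gamma_q_mpolyX (m : 'X_{1..n}) : gamma_q q i 'X_[m] = q ^+ m i *: 'X_[m].
Proof.
rewrite /gamma_q comp_mpolyX [in RHS]mpolyXE_id -mul_mpolyC.
under eq_bigr => j _ do rewrite tnth_mktuple.
rewrite (eq_bigr (fun j => (if j == i then (q ^+ m j)%:MP else 1) * 'X_j ^+ m j)).
  by rewrite big_split /= -big_mkcond big_pred1_eq.
move=> j _; case: eqP => _; last by rewrite mul1r.
by rewrite -mul_mpolyC exprMn rmorphXn.
Qed.

Lemma gamma_q_X (j : 'I_n) : gamma_q q i 'X_j = q ^+ (j == i) *: 'X_j.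
Proof. by rewrite gamma_q_mpolyX mnm1E. Qed.

End Gamma.

Section QDerivative.
Variables (n : nat) (q : CC) (i : 'I_n).

Lemma mdecDl (a b : 'X_{1..n}) : (0 < a i)%N -> mdec (a + b) i = (mdec a i + b)%MM.
Proof.
move=> ai; apply/mnmP => l; rewrite /mdec !(mnmE, mnmDE).
by case: eqP => [->|_]; rewrite ?subn0 // [RHS]addnC addnBA // addnC.
Qed.

Lemma mdecU : mdec U_(i) i = 0%MM.
Proof. by apply/mnmP => l; rewrite /mdec !mnmE eq_sym subnn. Qed.

Lemma dq_mpolyX (m : 'X_{1..n}) : dq q i 'X_[m] = qint q (m i) *: 'X_[mdec m i].
Proof. by rewrite /dq msuppX big_seq1 mcoeffX eqxx mul1r. Qed.

Lemma dqE (p : {mpoly CC[n]}) : dq q i p = \sum_(m <- msupp p) p@_m *: dq q i 'X_[m].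
Proof. by apply: eq_bigr => m _; rewrite dq_mpolyX scalerA. Qed.

Lemma dq1 : dq q i 1 = 0.
Proof. by rewrite -mpolyX0 dq_mpolyX mnm0E qint0 scale0r. Qed.

Lemma dq_X (j : 'I_n) : q - q^-1 != 0 -> dq q i 'X_j = (j == i)%:R.
Proof.
move=> hq; rewrite dq_mpolyX mnm1E; case: eqP => [->|_].
  by rewrite qint1 // mdecU mpolyX0 scale1r.
by rewrite qint0 scale0r.
Qed.

Lemma dq_twisted_derivation_on_monomials :
  twisted_derivation_on_monomials (gamma_q q i) (gamma_q q^-1 i) (dq q i).
Proof.
have shift (a b : 'X_{1..n}) (c : CC) :
    qint q (a i) *: 'X_[mdec a i] * (c *: 'X_[b])
    = (c * qint q (a i)) *: 'X_[mdec (a + b) i] :> {mpoly CC[n]}.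
  rewrite -scalerAr -scalerAl scalerA.
  (* mdec truncates at a i = 0, but there [0]_q = 0. *)
  case: (posnP (a i)) => [->|ai]; first by rewrite qint0 mulr0 !scale0r.
  by rewrite mdecDl // mpolyXD.
move=> a b; rewrite -mpolyXD !dq_mpolyX !gamma_q_mpolyX mnmDE qintD exprVn.
rewrite shift [_ *: 'X_[a] * _]mulrC shift addmC -scalerDl.
by congr (_ *: _); rewrite mulrC.
Qed.

End QDerivative.

Lemma twisted_derivation_gamma_q_X (n : nat) (q : CC) (i j : 'I_n)
    (D : {mpoly CC[n]} -> {mpoly CC[n]}) :
  q - q^-1 != 0 -> twisted_derivation (gamma_q q i) (gamma_q q^-1 i) D ->
  j != i -> D 'X_j = 0.
Proof.
move=> hq hD ji; have := twisted_derivation_comm hD 'X_i 'X_j.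
rewrite !gamma_q_X eqxx (negbTE ji) !expr0 subrr mulr0 !expr1 -scalerBl.
move/esym/eqP; rewrite mulf_eq0 scaler_eq0 (negbTE hq) (negbTE (mpolyX_neq0 _ _)).
by rewrite !orbF => /eqP.
Qed.

Theorem lemma1p2 (n : nat) (q : CC) (i : 'I_n)
  (hq0 : q != 0) (hq1 : q != 1) (hqm1 : q != -1)
  (D : {linear {mpoly CC[n]} -> {mpoly CC[n]}})
  (hD : twisted_derivation (gamma_q q i) (gamma_q q^-1 i) D) :
  exists f : {mpoly CC[n]}, forall a : {mpoly CC[n]}, D a = f * dq q i a.
Proof.
have hq := subr_inv_neq0 hq0 hq1 hqm1.
pose f := D 'X_i.
have hDm : twisted_derivation_on_monomials (gamma_q q i) (gamma_q q^-1 i) D.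
  by move=> a b; apply: hD.
have hEm := twisted_derivation_on_monomials_mull f (dq_twisted_derivation_on_monomials q i).
have DE1 : D 1 = f * dq q i 1.
  by rewrite dq1 mulr0 (twisted_derivation1 hD) // /gamma_q comp_mpoly1.
have DEX j : D 'X_j = f * dq q i 'X_j.
  rewrite dq_X //; case: eqP => [->|/eqP ji]; first by rewrite mulr1.
  by rewrite mulr0 (twisted_derivation_gamma_q_X hq hD ji).
have DX := eq_twisted_derivation_on_monomials hDm hEm DE1 DEX.
exists f => a; rewrite {1}(mpolyE a) linear_sum dqE mulr_sumr.
by apply: eq_bigr => m _; rewrite linearZ /= DX scalerAr.
Qed.
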